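(* Let $K,M$ be symmetric homogeneous stable means and $N$ a symmetric homogeneous mean, all three having symmetric asymptotic expansions with coefficients $(a^K_n),(a^M_n),(a^N_n)$. If $N$ is simultaneously $(K,M)$-stabilizable and $(M,K)$-stabilizable, then $a^K_n=a^M_n$ for all $n\in\mathbb N_0$ and $a^N_1=a^M_1=a^K_1$; moreover $a^N_2=\frac16a^N_1(1+a^N_1)(1-4a^N_1)$.
   Context: A bi-variate mean is $M:(0,\infty)^2\to(0,\infty)$ with $\min\le M\le\max$; symmetric and homogeneous (degree 1). $M$ is stable if $M(s,t)=M\big(M(s,M(s,t)),M(M(s,t),t)\big)$. For stable means $K,M$, $N$ is $(K,M)$-stabilizable if $N(s,t)=K\big(N(s,M(s,t)),N(M(s,t),t)\big)$ for all $s,t>0$. A mean has a symmetric asymptotic expansion with coefficients $(a_n)$ if for every fixed real $t$ and $N\ge0$, $M(x-t,x+t)=\sum_{n=0}^Na_nt^{2n}x^{-2n+1}+o(x^{-2N+1})$ as $x\to\infty$. *)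

From Stdlib Require Import Reals Lra.
Open Scope R_scope.

(* A bivariate mean on (0,oo)^2; values outside (0,oo)^2 are irrelevant. *)
Definition is_mean (M : R -> R -> R) : Prop :=
  forall s t, 0 < s -> 0 < t -> Rmin s t <= M s t /\ M s t <= Rmax s t.

Definition symmetric (M : R -> R -> R) : Prop :=
  forall s t, 0 < s -> 0 < t -> M s t = M t s.

Definition homogeneous (M : R -> R -> R) : Prop :=
  forall l s t, 0 < l -> 0 < s -> 0 < t -> M (l * s) (l * t) = l * M s t.

Definition stable (M : R -> R -> R) : Prop :=
  forall s t, 0 < s -> 0 < t -> M s t = M (M s (M s t)) (M (M s t) t).

Definition stabilizable (K M N : R -> R -> R) : Prop :=
  forall s t, 0 < s -> 0 < t -> N s t = K (N s (M s t)) (N (M s t) t).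

(* M(x-t,x+t) = sum_{n=0}^{N} a_n t^{2n} x^{-2n+1} + o(x^{-2N+1}) as x -> oo,
   for every fixed real t and every N; here x^{-2n+1} = x / x^(2n). *)
Definition has_sym_asymp_exp (M : R -> R -> R) (a : nat -> R) : Prop :=
  forall (t : R) (N : nat) (eps : R), 0 < eps ->
    exists X : R, forall x : R, X < x -> Rabs t < x ->
      Rabs (M (x - t) (x + t)
            - sum_f_R0 (fun n => a n * t ^ (2 * n) * (x / x ^ (2 * n))) N)
      <= eps * (x / x ^ (2 * N)).

From Stdlib Require Import Reals Lra Lia List Arith.
Open Scope R_scope.
Import ListNotations.

(* By homogeneity a mean [P] is determined by its profile [F v = P (1 - v) (1 + v)] through
   [P s t = (s + t)/2 * F ((t - s)/(s + t))], and the expansion of [P (x - t) (x + t)] at infinity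
   becomes a local expansion [F v = sum a_n v^(2n) + o(v^(2N))] at [0]. Stabilizability is then a
   functional equation between profiles near [0].  If the coefficients of [K] and [M] agree below
   [n >= 1], expanding the two equations to order [2n] and subtracting gives
   [(aK n - aM n) (2^(-2n) - 1/2) = 0].  Expanding one equation to order 4 gives
   [3 aN 1 = 2 aM 1 + aK 1] and a linear relation for [aN 2]; the same relation for the
   stability equation of [M] determines [aM 2], hence [aN 2]. *)

(** * Landau symbols at [0+] *)

Definition near0 (P : R -> Prop) : Prop :=
  exists d, 0 < d /\ forall u, 0 < u < d -> P u.

Definition is_o (k : nat) (f : R -> R) : Prop :=
  forall eps, 0 < eps -> near0 (fun u => Rabs (f u) <= eps * u ^ k).

Definition is_O (k : nat) (f : R -> R) : Prop :=
  exists C, 0 <= C /\ near0 (fun u => Rabs (f u) <= C * u ^ k).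

Lemma near0_and (P Q : R -> Prop) : near0 P -> near0 Q -> near0 (fun u => P u /\ Q u).
Proof.
  intros [d1 [Hd1 HP]] [d2 [Hd2 HQ]]. exists (Rmin d1 d2). split.
  - apply Rmin_glb_lt; assumption.
  - intros u Hu. pose proof (Rmin_l d1 d2). pose proof (Rmin_r d1 d2).
    split; [apply HP | apply HQ]; lra.
Qed.

Lemma near0_impl (P Q : R -> Prop) : near0 P -> (forall u, 0 < u -> P u -> Q u) -> near0 Q.
Proof.
  intros [d [Hd HP]] HPQ. exists d. split; [assumption|].
  intros u Hu. apply HPQ; [lra | auto].
Qed.

Lemma near0_lt d : 0 < d -> near0 (fun u => u < d).
Proof. intros Hd. exists d. split; [assumption | intros; lra]. Qed.

Lemma near0_of_interval01 (P : R -> Prop) : (forall u, 0 < u < 1 -> P u) -> near0 P.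
Proof. intros HP. exists 1. split; [lra | assumption]. Qed.

Lemma is_o_near k f g : near0 (fun u => f u = g u) -> is_o k g -> is_o k f.
Proof.
  intros Hfg Hg eps Heps. eapply near0_impl; [apply (near0_and _ _ Hfg (Hg eps Heps))|].
  intros u _ [-> Hu]. exact Hu.
Qed.

Lemma is_O_near k f g : near0 (fun u => f u = g u) -> is_O k g -> is_O k f.
Proof.
  intros Hfg [C [HC Hg]]. exists C. split; [assumption|].
  eapply near0_impl; [apply (near0_and _ _ Hfg Hg)|]. intros u _ [-> Hu]. exact Hu.
Qed.

Lemma is_o_ext k f g : (forall u, f u = g u) -> is_o k g -> is_o k f.
Proof. intros Hfg. apply is_o_near, near0_of_interval01. auto. Qed.

Lemma is_O_ext k f g : (forall u, f u = g u) -> is_O k g -> is_O k f.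
Proof. intros Hfg. apply is_O_near, near0_of_interval01. auto. Qed.

Lemma pow_antimono_le_1 u j i : 0 <= u <= 1 -> u ^ (j + i) <= u ^ j.
Proof.
  intros Hu. rewrite pow_add.
  assert (0 <= u ^ j) by (apply pow_le; lra).
  assert (u ^ i <= 1) by (rewrite <- (pow1 i); apply pow_incr; lra).
  assert (0 <= u ^ i) by (apply pow_le; lra).
  nra.
Qed.

Lemma is_O_of_is_o k f : is_o k f -> is_O k f.
Proof. intros Hf. exists 1. split; [lra | apply Hf; lra]. Qed.

Lemma is_O_weaken k j f : (j <= k)%nat -> is_O k f -> is_O j f.
Proof.
  intros Hjk [C [HC Hf]]. exists C. split; [assumption|].
  eapply near0_impl; [apply (near0_and _ _ Hf (near0_lt 1 Rlt_0_1))|].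
  intros u Hu [Hfu Hu1]. replace k with (j + (k - j))%nat in Hfu by lia.
  pose proof (pow_antimono_le_1 u j (k - j)). nra.
Qed.

Lemma is_o_weaken k j f : (j <= k)%nat -> is_o k f -> is_o j f.
Proof.
  intros Hjk Hf eps Heps.
  eapply near0_impl; [apply (near0_and _ _ (Hf eps Heps) (near0_lt 1 Rlt_0_1))|].
  intros u Hu [Hfu Hu1]. replace k with (j + (k - j))%nat in Hfu by lia.
  pose proof (pow_antimono_le_1 u j (k - j)). nra.
Qed.

Lemma is_o_of_is_O_S k f : is_O (S k) f -> is_o k f.
Proof.
  intros [C [HC Hf]] eps Heps.
  assert (Hd : 0 < eps / (C + 1)) by (apply Rdiv_lt_0_compat; lra).
  eapply near0_impl; [apply (near0_and _ _ Hf (near0_lt _ Hd))|].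
  intros u Hu [Hfu Hud]. simpl in Hfu.
  assert (0 < u ^ k) by (apply pow_lt; lra).
  assert (C * u <= eps).
  { apply Rmult_lt_compat_l with (r := C + 1) in Hud; [|lra].
    replace ((C + 1) * (eps / (C + 1))) with eps in Hud by (field; lra). nra. }
  nra.
Qed.

Lemma is_o_0_of_is_O_S k f : is_O (S k) f -> is_o 0 f.
Proof. intros Hf. apply (is_o_weaken k); [lia | apply is_o_of_is_O_S, Hf]. Qed.

Lemma is_o_plus k f g : is_o k f -> is_o k g -> is_o k (fun u => f u + g u).
Proof.
  intros Hf Hg eps Heps.
  eapply near0_impl; [apply (near0_and _ _ (Hf (eps / 2) ltac:(lra)) (Hg (eps / 2) ltac:(lra)))|].
  intros u _ [Hfu Hgu]. eapply Rle_trans; [apply Rabs_triang | lra].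
Qed.

Lemma is_O_plus k f g : is_O k f -> is_O k g -> is_O k (fun u => f u + g u).
Proof.
  intros [C1 [HC1 Hf]] [C2 [HC2 Hg]]. exists (C1 + C2). split; [lra|].
  eapply near0_impl; [apply (near0_and _ _ Hf Hg)|].
  intros u _ [Hfu Hgu]. eapply Rle_trans; [apply Rabs_triang | lra].
Qed.

Lemma is_O_mult i j f g : is_O i f -> is_O j g -> is_O (i + j) (fun u => f u * g u).
Proof.
  intros [C1 [HC1 Hf]] [C2 [HC2 Hg]]. exists (C1 * C2). split; [nra|].
  eapply near0_impl; [apply (near0_and _ _ Hf Hg)|].
  intros u Hu [Hfu Hgu]. rewrite Rabs_mult, pow_add.
  assert (0 < u ^ i) by (apply pow_lt; lra). assert (0 < u ^ j) by (apply pow_lt; lra).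
  replace (C1 * C2 * (u ^ i * u ^ j)) with ((C1 * u ^ i) * (C2 * u ^ j)) by ring.
  apply Rmult_le_compat; auto using Rabs_pos.
Qed.

Lemma is_o_mult i j f g : is_o i f -> is_O j g -> is_o (i + j) (fun u => f u * g u).
Proof.
  intros Hf [C [HC Hg]] eps Heps.
  assert (Hd : 0 < eps / (C + 1)) by (apply Rdiv_lt_0_compat; lra).
  eapply near0_impl; [apply (near0_and _ _ (Hf _ Hd) Hg)|].
  intros u Hu [Hfu Hgu]. rewrite Rabs_mult, pow_add.
  assert (0 < u ^ i) by (apply pow_lt; lra). assert (0 < u ^ j) by (apply pow_lt; lra).
  apply Rle_trans with ((eps / (C + 1) * u ^ i) * (C * u ^ j)).
  { apply Rmult_le_compat; auto using Rabs_pos. }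
  assert (eps / (C + 1) * C <= eps).
  { apply Rmult_le_reg_r with (C + 1); [lra|].
    replace (eps / (C + 1) * C * (C + 1)) with (eps * C) by (field; lra). nra. }
  assert (0 < u ^ i * u ^ j) by nra. nra.
Qed.

Lemma is_o_mult_r i j f g : is_O i f -> is_o j g -> is_o (i + j) (fun u => f u * g u).
Proof.
  intros Hf Hg. rewrite Nat.add_comm.
  apply (is_o_ext _ _ (fun u => g u * f u)); [intros; ring | apply is_o_mult; assumption].
Qed.

Lemma is_O_const c : is_O 0 (fun _ => c).
Proof.
  exists (Rabs c). split; [apply Rabs_pos|]. apply near0_of_interval01. intros; simpl; lra.
Qed.

Lemma is_O_id : is_O 1 (fun u => u).
Proof.
  exists 1. split; [lra|]. apply near0_of_interval01. intros u Hu. rewrite Rabs_right; simpl; lra.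
Qed.

Lemma is_O_pow_id k : is_O k (fun u => u ^ k).
Proof.
  exists 1. split; [lra|]. apply near0_of_interval01. intros u Hu.
  rewrite Rabs_right; [lra | apply Rle_ge, pow_le; lra].
Qed.

Lemma is_O_0 k : is_O k (fun _ => 0).
Proof. exists 0. split; [lra|]. apply near0_of_interval01. intros; rewrite Rabs_R0; lra. Qed.

Lemma is_o_0 k : is_o k (fun _ => 0).
Proof.
  intros eps Heps. apply near0_of_interval01. intros u Hu. rewrite Rabs_R0.
  assert (0 < u ^ k) by (apply pow_lt; lra). nra.
Qed.

Lemma is_o_scal k c f : is_o k f -> is_o k (fun u => c * f u).
Proof. intros Hf. apply (is_o_mult_r 0 k); [apply is_O_const | assumption]. Qed.

Lemma is_O_scal k c f : is_O k f -> is_O k (fun u => c * f u).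
Proof. intros Hf. apply (is_O_mult 0 k); [apply is_O_const | assumption]. Qed.

Lemma is_o_minus k f g : is_o k f -> is_o k g -> is_o k (fun u => f u - g u).
Proof.
  intros Hf Hg. apply (is_o_ext k _ (fun u => f u + (-1) * g u)); [intros; ring|].
  apply is_o_plus; [assumption | apply is_o_scal; assumption].
Qed.

Lemma is_O_minus k f g : is_O k f -> is_O k g -> is_O k (fun u => f u - g u).
Proof.
  intros Hf Hg. apply (is_O_ext k _ (fun u => f u + (-1) * g u)); [intros; ring|].
  apply is_O_plus; [assumption | apply is_O_scal; assumption].
Qed.

Lemma is_O_pow j f m : is_O j f -> is_O (m * j) (fun u => f u ^ m).
Proof.
  intros Hf. induction m as [|m IH].
  - apply (is_O_ext _ _ (fun _ => 1)); [reflexivity | apply is_O_const].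
  - apply (is_O_ext _ _ (fun u => f u * f u ^ m)); [intros; reflexivity | apply is_O_mult; assumption].
Qed.

Lemma is_O_abs k f : is_O k f -> is_O k (fun u => Rabs (f u)).
Proof.
  intros [C [HC Hf]]. exists C. split; [assumption|].
  eapply near0_impl; [exact Hf|]. intros u _ Hu. rewrite Rabs_Rabsolu. exact Hu.
Qed.

Lemma is_O_le k f g : near0 (fun u => Rabs (f u) <= g u) -> is_O k g -> is_O k f.
Proof.
  intros Hfg [C [HC Hg]]. exists C. split; [assumption|].
  eapply near0_impl; [apply (near0_and _ _ Hfg Hg)|].
  intros u _ [Hfu Hgu]. eapply Rle_trans; [exact Hfu|]. eapply Rle_trans; [apply Rle_abs | exact Hgu].
Qed.

Lemma is_o_monomial_coef k c : is_o k (fun u => c * u ^ k) -> c = 0.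
Proof.
  intros Hc. destruct (Req_dec c 0) as [|Hc0]; [assumption|]. exfalso.
  pose proof (Rabs_pos_lt c Hc0).
  destruct (Hc (Rabs c / 2) ltac:(lra)) as [d [Hd Hu]].
  specialize (Hu (d / 2) ltac:(lra)).
  assert (0 < (d / 2) ^ k) by (apply pow_lt; lra).
  rewrite Rabs_mult, (Rabs_right ((d / 2) ^ k)) in Hu by lra. nra.
Qed.

Lemma near0_abs_le_1 f : is_O 1 f -> near0 (fun u => Rabs (f u) <= 1).
Proof.
  intros Hf. eapply near0_impl; [apply (is_o_of_is_O_S 0 f Hf 1 Rlt_0_1)|].
  intros u _ Hu. simpl in Hu. lra.
Qed.

Section LimitNonzero.

Variables (f : R -> R) (c : R).
Hypotheses (Hf : is_o 0 (fun u => f u - c)) (Hc : c <> 0).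

Lemma near0_abs_ge_half : near0 (fun u => Rabs c / 2 <= Rabs (f u)).
Proof.
  pose proof (Rabs_pos_lt c Hc).
  eapply near0_impl; [apply (Hf (Rabs c / 2)); lra|].
  intros u _ Hu. simpl in Hu. rewrite Rmult_1_r, Rabs_minus_sym in Hu.
  pose proof (Rabs_triang_inv c (c - f u)).
  replace (c - (c - f u)) with (f u) in * by ring. lra.
Qed.

Lemma near0_neq_0 : near0 (fun u => f u <> 0).
Proof.
  pose proof (Rabs_pos_lt c Hc).
  eapply near0_impl; [apply near0_abs_ge_half|].
  intros u _ Hu Hfu. cbv beta in Hu. rewrite Hfu, Rabs_R0 in Hu. lra.
Qed.

Lemma is_O_inv : is_O 0 (fun u => / f u).
Proof.
  pose proof (Rabs_pos_lt c Hc).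
  exists (2 / Rabs c). split; [apply Rlt_le, Rdiv_lt_0_compat; lra|].
  eapply near0_impl; [apply (near0_and _ _ near0_abs_ge_half near0_neq_0)|].
  intros u _ [Hu Hfu]. rewrite Rmult_1_r, Rabs_inv.
  pose proof (Rabs_pos_lt _ Hfu).
  apply Rmult_le_reg_l with (Rabs (f u) * Rabs c); [nra|].
  replace (Rabs (f u) * Rabs c * / Rabs (f u)) with (Rabs c) by (field; lra).
  replace (Rabs (f u) * Rabs c * (2 / Rabs c)) with (2 * Rabs (f u)) by (field; lra). lra.
Qed.

Lemma is_O_0_of_limit : is_O 0 f.
Proof.
  apply (is_O_ext _ _ (fun u => (f u - c) + c)); [intros; ring|].
  apply is_O_plus; [apply is_O_of_is_o, Hf | apply is_O_const].
Qed.

End LimitNonzero.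

(** * The profile of a homogeneous mean *)

Definition profile (P : R -> R -> R) (v : R) : R := P (1 - v) (1 + v).

Definition even_jet (a : nat -> R) (n : nat) (v : R) : R :=
  sum_f_R0 (fun j => a j * v ^ (2 * j)) n.

Definition has_local_expansion (F : R -> R) (a : nat -> R) : Prop :=
  forall n eps, 0 < eps -> exists d, 0 < d /\
    forall v, Rabs v < d -> Rabs (F v - even_jet a n v) <= eps * Rabs v ^ (2 * n).

Definition from_profile (F : R -> R) (s t : R) : R := (s + t) / 2 * F ((t - s) / (s + t)).

Lemma mean_pos P s t : is_mean P -> 0 < s -> 0 < t -> 0 < P s t.
Proof.
  intros HP Hs Ht. destruct (HP s t Hs Ht) as [Hmin _].
  unfold Rmin in Hmin. destruct (Rle_dec s t); lra.
Qed.

(* A mean of [x - 1] and [x + 1] is [x + O(1)], which forces [a 0 = 1]. *)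
Lemma asymp_expansion_coef0 P a : is_mean P -> has_sym_asymp_exp P a -> a 0%nat = 1.
Proof.
  intros HP Ha. destruct (Req_dec (a 0%nat) 1) as [|Hne]; [assumption|]. exfalso.
  set (e := Rabs (a 0%nat - 1)). assert (He : 0 < e) by (apply Rabs_pos_lt; lra).
  destruct (Ha 1 0%nat (e / 2) ltac:(lra)) as [X HX].
  set (x := Rabs X + 1 + 4 / e).
  assert (0 < 4 / e) by (apply Rdiv_lt_0_compat; lra).
  pose proof (Rabs_pos X). pose proof (Rle_abs X).
  specialize (HX x ltac:(unfold x; lra) ltac:(rewrite Rabs_R1; unfold x; lra)).
  simpl in HX. replace (x / 1) with x in HX by field.
  destruct (HP (x - 1) (x + 1) ltac:(unfold x; lra) ltac:(unfold x; lra)) as [Hlo Hhi].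
  rewrite Rmin_left in Hlo by lra. rewrite Rmax_right in Hhi by lra.
  set (p := P (x - 1) (x + 1)) in *.
  assert (Hx : e * x <= e / 2 * x + 1).
  { unfold e. rewrite <- (Rabs_right x) by (unfold x; lra). rewrite <- Rabs_mult.
    replace ((a 0%nat - 1) * x) with (- (p - a 0%nat * 1 * x) + (p - x)) by ring.
    eapply Rle_trans; [apply Rabs_triang|]. rewrite Rabs_Ropp, (Rabs_right x) by (unfold x; lra).
    assert (Rabs (p - x) <= 1) by (apply Rabs_le; lra).
    fold e. lra. }
  assert (e * (4 / e) = 4) by (field; lra).
  assert (e * x > 4) by (unfold x; nra).
  lra.
Qed.

Lemma mean_from_profile P s t :
  homogeneous P -> 0 < s -> 0 < t -> P s t = from_profile (profile P) s t.
Proof.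
  intros HP Hs Ht. unfold from_profile, profile.
  set (v := (t - s) / (s + t)).
  assert (0 < 1 - v).
  { unfold v. replace (1 - (t - s) / (s + t)) with (2 * s / (s + t)) by (field; lra).
    apply Rdiv_lt_0_compat; lra. }
  assert (0 < 1 + v).
  { unfold v. replace (1 + (t - s) / (s + t)) with (2 * t / (s + t)) by (field; lra).
    apply Rdiv_lt_0_compat; lra. }
  rewrite <- HP by lra. f_equal; unfold v; field; lra.
Qed.

Lemma even_jet_0 a n : even_jet a n 0 = a 0%nat.
Proof.
  unfold even_jet. induction n as [|n IH]; [simpl; ring|].
  rewrite tech5, IH. replace (2 * S n)%nat with (S (2 * n + 1)) by lia. simpl. ring.
Qed.

Lemma even_jet_opp a n v : even_jet a n (- v) = even_jet a n v.
Proof.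
  unfold even_jet. apply sum_eq. intros j _. rewrite !pow_mult. f_equal. f_equal. ring.
Qed.

(* The asymptotic expansion at [x = 1/v], multiplied by [v], is the local expansion at [v]. *)
Lemma even_jet_rescale a n v : v <> 0 ->
  v * sum_f_R0 (fun j => a j * 1 ^ (2 * j) * (/ v / (/ v) ^ (2 * j))) n = even_jet a n v.
Proof.
  intros Hv. unfold even_jet. induction n as [|n IH]; [simpl; field; assumption|].
  rewrite !tech5, Rmult_plus_distr_l, IH. f_equal.
  rewrite pow1, pow_inv. field. split; [apply pow_nonzero|]; assumption.
Qed.

Section Profile.

Variables (P : R -> R -> R) (a : nat -> R).
Hypotheses (HP : is_mean P) (HPsym : symmetric P) (HPhom : homogeneous P)
  (Ha : has_sym_asymp_exp P a).

Lemma profile_local_expansion_pos n eps : 0 < eps -> exists d, 0 < d < 1 /\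
  forall v, 0 < v < d -> Rabs (profile P v - even_jet a n v) <= eps * v ^ (2 * n).
Proof.
  intros Heps. destruct (Ha 1 n eps Heps) as [X HX].
  pose proof (Rabs_pos X). pose proof (Rle_abs X).
  assert (Hd1 : / (Rabs X + 2) < 1) by (rewrite <- Rinv_1; apply Rinv_lt_contravar; lra).
  exists (/ (Rabs X + 2)). split; [split; [apply Rinv_0_lt_compat; lra | assumption]|].
  intros v [Hv Hvd].
  assert (Hx : Rabs X + 2 < / v).
  { rewrite <- (Rinv_inv (Rabs X + 2)). apply Rinv_lt_contravar; [|assumption].
    apply Rmult_lt_0_compat; [assumption | apply Rinv_0_lt_compat; lra]. }
  specialize (HX (/ v) ltac:(lra) ltac:(rewrite Rabs_R1; lra)).
  assert (E : profile P v = v * P (/ v - 1) (/ v + 1)).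
  { unfold profile. replace (/ v - 1) with (/ v * (1 - v)) by (field; lra).
    replace (/ v + 1) with (/ v * (1 + v)) by (field; lra).
    rewrite HPhom by (try apply Rinv_0_lt_compat; lra). field. lra. }
  rewrite E, <- (even_jet_rescale a n v) by lra.
  rewrite <- Rmult_minus_distr_l, Rabs_mult, (Rabs_right v) by lra.
  replace (eps * v ^ (2 * n)) with (v * (eps * (/ v / (/ v) ^ (2 * n)))).
  - apply Rmult_le_compat_l; lra.
  - rewrite pow_inv. field. split; [apply pow_nonzero|]; lra.
Qed.

Lemma profile_local_expansion : has_local_expansion (profile P) a.
Proof.
  intros n eps Heps. destruct (profile_local_expansion_pos n eps Heps) as [d [Hd Hpos]].
  exists d. split; [lra|]. intros v Hv.
  destruct (Rtotal_order v 0) as [Hneg | [-> | Hvpos]].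
  - rewrite Rabs_left in Hv by assumption.
    replace (profile P v) with (profile P (- v)) by (unfold profile; rewrite HPsym by lra; f_equal; ring).
    rewrite <- (even_jet_opp a n v), <- (Rabs_Ropp v), (Rabs_right (- v)) by lra.
    apply Hpos. lra.
  - rewrite even_jet_0, (asymp_expansion_coef0 P a HP Ha). unfold profile.
    destruct (HP (1 - 0) (1 + 0)) as [Hlo Hhi]; try lra.
    rewrite Rmin_left in Hlo by lra. rewrite Rmax_left in Hhi by lra.
    replace (P (1 - 0) (1 + 0) - 1) with 0 by lra. rewrite Rabs_R0.
    apply Rmult_le_pos; [lra | apply pow_le; lra].
  - rewrite (Rabs_right v) in Hv |- * by lra. apply Hpos. lra.
Qed.

End Profile.

Definition profile_equation (FK FM FN : R -> R) : Prop :=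
  near0 (fun u => FN u = from_profile FK (from_profile FN (1 - u) (FM u))
                                          (from_profile FN (FM u) (1 + u))).

Lemma profile_stabilizable K M N : is_mean M -> is_mean N -> homogeneous K -> homogeneous N ->
  stabilizable K M N -> profile_equation (profile K) (profile M) (profile N).
Proof.
  intros HM HN HKhom HNhom Hstab. apply near0_of_interval01. intros u Hu.
  unfold profile at 1. rewrite Hstab by lra.
  assert (0 < profile M u) by (apply mean_pos; auto; lra).
  assert (0 < N (1 - u) (profile M u)) by (apply mean_pos; auto; lra).
  assert (0 < N (profile M u) (1 + u)) by (apply mean_pos; auto; lra).
  fold (profile M u). rewrite mean_from_profile by assumption.
  rewrite (mean_from_profile N (1 - u)), (mean_from_profile N (profile M u) (1 + u)) by (auto; lra).
  reflexivity.
Qed.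

(** * Composition with a local expansion *)

Lemma pow_diff_le x y m :
  Rabs x <= 1 -> Rabs y <= 1 -> Rabs (x ^ m - y ^ m) <= INR m * Rabs (x - y).
Proof.
  intros Hx Hy. induction m as [|m IH].
  - simpl. replace (1 - 1) with 0 by ring. rewrite Rabs_R0. lra.
  - replace (x ^ S m - y ^ S m) with (x * (x ^ m - y ^ m) + y ^ m * (x - y)) by (simpl; ring).
    eapply Rle_trans; [apply Rabs_triang|]. rewrite !Rabs_mult, S_INR.
    assert (Rabs (y ^ m) <= 1).
    { rewrite <- RPow_abs, <- (pow1 m). apply pow_incr. split; [apply Rabs_pos | assumption]. }
    pose proof (Rabs_pos x). pose proof (Rabs_pos (x ^ m - y ^ m)). pose proof (Rabs_pos (x - y)).
    pose proof (Rabs_pos (y ^ m)). nra.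
Qed.

Lemma even_jet_lipschitz a n : exists C, 0 <= C /\ forall x y, Rabs x <= 1 -> Rabs y <= 1 ->
  Rabs (even_jet a n x - even_jet a n y) <= C * ((Rabs x + Rabs y) * Rabs (x - y)).
Proof.
  induction n as [|n [C [HC IH]]].
  - exists 0. split; [lra|]. intros x y _ _. unfold even_jet. simpl.
    replace (a 0%nat * 1 - a 0%nat * 1) with 0 by ring. rewrite Rabs_R0. lra.
  - pose proof (Rabs_pos (a (S n))). pose proof (pos_INR (S n)).
    exists (C + Rabs (a (S n)) * INR (S n)). split; [nra|].
    intros x y Hx Hy. unfold even_jet. rewrite !tech5. fold (even_jet a n x) (even_jet a n y).
    replace (even_jet a n x + a (S n) * x ^ (2 * S n) - (even_jet a n y + a (S n) * y ^ (2 * S n)))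
      with ((even_jet a n x - even_jet a n y) + a (S n) * ((x ^ 2) ^ S n - (y ^ 2) ^ S n))
      by (rewrite !pow_mult; ring).
    eapply Rle_trans; [apply Rabs_triang|]. rewrite Rabs_mult.
    assert (Hsq : forall z, Rabs z <= 1 -> Rabs (z ^ 2) <= 1).
    { intros z Hz. rewrite <- RPow_abs, <- (pow1 2). apply pow_incr. split; [apply Rabs_pos | assumption]. }
    pose proof (pow_diff_le (x ^ 2) (y ^ 2) (S n) (Hsq x Hx) (Hsq y Hy)).
    assert (Rabs (x ^ 2 - y ^ 2) <= (Rabs x + Rabs y) * Rabs (x - y)).
    { replace (x ^ 2 - y ^ 2) with ((x + y) * (x - y)) by ring. rewrite Rabs_mult.
      apply Rmult_le_compat_r; [apply Rabs_pos | apply Rabs_triang]. }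
    pose proof (IH x y Hx Hy). pose proof (Rabs_pos (x ^ 2 - y ^ 2)).
    assert (0 <= (Rabs x + Rabs y) * Rabs (x - y)).
    { pose proof (Rabs_pos x). pose proof (Rabs_pos y). pose proof (Rabs_pos (x - y)). nra. }
    assert (Rabs (a (S n)) * Rabs ((x ^ 2) ^ S n - (y ^ 2) ^ S n)
            <= Rabs (a (S n)) * (INR (S n) * ((Rabs x + Rabs y) * Rabs (x - y)))).
    { apply Rmult_le_compat_l; [assumption|]. eapply Rle_trans; [eassumption|].
      apply Rmult_le_compat_l; assumption. }
    nra.
Qed.

Lemma even_jet_diff_top aK aM n v : (forall j, (j < n)%nat -> aK j = aM j) ->
  even_jet aK n v - even_jet aM n v = (aK n - aM n) * v ^ (2 * n).
Proof.
  intros Hlow. destruct n as [|n]; [unfold even_jet; simpl; ring|].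
  unfold even_jet. rewrite !tech5.
  rewrite (sum_eq (fun j => aK j * v ^ (2 * j)) (fun j => aM j * v ^ (2 * j)) n)
    by (intros j Hj; rewrite Hlow by lia; reflexivity).
  ring.
Qed.

Lemma pow_diff_is_O x y : is_O 1 x -> is_O 1 y -> is_O 2 (fun u => x u - y u) ->
  forall p, is_O (S (S p)) (fun u => x u ^ S p - y u ^ S p).
Proof.
  intros Hx Hy Hxy. induction p as [|p IH].
  - apply (is_O_ext _ _ (fun u => x u - y u)); [intros; simpl; ring | assumption].
  - apply (is_O_ext _ _ (fun u => x u * (x u ^ S p - y u ^ S p) + y u ^ S p * (x u - y u)));
      [intros; simpl; ring|].
    apply is_O_plus.
    + apply (is_O_mult 1 (S (S p))); assumption.
    + apply (is_O_weaken (S p * 1 + 2)); [lia|]. apply is_O_mult; [apply is_O_pow|]; assumption.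
Qed.

Section NearOne.

Variables s t : R -> R.
Hypotheses (Hs : is_O 1 (fun u => s u - 1)) (Ht : is_O 1 (fun u => t u - 1)).

Lemma sum_near_2 : is_o 0 (fun u => s u + t u - 2).
Proof.
  apply (is_o_0_of_is_O_S 0). apply (is_O_ext _ _ (fun u => (s u - 1) + (t u - 1))); [intros; ring|].
  apply is_O_plus; assumption.
Qed.

Lemma sum_neq_0 : near0 (fun u => s u + t u <> 0).
Proof. apply (near0_neq_0 _ 2); [exact sum_near_2 | lra]. Qed.

Lemma sum_inv_is_O : is_O 0 (fun u => / (s u + t u)).
Proof. apply (is_O_inv _ 2); [exact sum_near_2 | lra]. Qed.

Lemma diff_is_O_1 : is_O 1 (fun u => t u - s u).
Proof.
  apply (is_O_ext _ _ (fun u => (t u - 1) - (s u - 1))); [intros; ring|].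
  apply is_O_minus; assumption.
Qed.

Lemma ratio_is_O_1 : is_O 1 (fun u => (t u - s u) / (s u + t u)).
Proof. apply (is_O_mult 1 0 _ (fun u => / (s u + t u))); [exact diff_is_O_1 | exact sum_inv_is_O]. Qed.

End NearOne.

Lemma ratio_perturb k s t s' t' :
  is_O 1 (fun u => s u - 1) -> is_O 1 (fun u => t u - 1) ->
  is_O 1 (fun u => s' u - 1) -> is_O 1 (fun u => t' u - 1) ->
  is_O k (fun u => s u - s' u) -> is_O k (fun u => t u - t' u) ->
  is_O k (fun u => (t u - s u) / (s u + t u) - (t' u - s' u) / (s' u + t' u)).
Proof.
  intros Hs Ht Hs' Ht' Hss' Htt'.
  apply (is_O_near _ _ (fun u => (((t u - t' u) - (s u - s' u)) * (s' u + t' u)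
      - (t' u - s' u) * ((s u - s' u) + (t u - t' u))) * / (s u + t u) * / (s' u + t' u))).
  { eapply near0_impl; [apply (near0_and _ _ (sum_neq_0 _ _ Hs Ht) (sum_neq_0 _ _ Hs' Ht'))|].
    intros u _ [Hc Hc']. field. split; assumption. }
  replace k with (k + 0 + 0)%nat at 1 by lia.
  apply is_O_mult; [apply is_O_mult|];
    [|apply sum_inv_is_O; assumption | apply sum_inv_is_O; assumption].
  apply is_O_minus.
  - replace k with (k + 0)%nat at 1 by lia.
    apply is_O_mult; [apply is_O_minus; assumption|].
    apply (is_O_0_of_limit _ 2). apply sum_near_2; assumption.
  - apply (is_O_weaken (1 + k)); [lia|].
    apply is_O_mult; [apply diff_is_O_1; assumption | apply is_O_plus; assumption].
Qed.

Lemma even_jet_comp_perturb a n k r r' : is_O 1 r -> is_O 1 r' -> is_O k (fun u => r u - r' u) ->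
  is_o k (fun u => even_jet a n (r u) - even_jet a n (r' u)).
Proof.
  intros Hr Hr' Hrr'. destruct (even_jet_lipschitz a n) as [C [HC Hlip]].
  apply is_o_of_is_O_S.
  apply (is_O_le _ _ (fun u => C * ((Rabs (r u) + Rabs (r' u)) * Rabs (r u - r' u)))).
  - eapply near0_impl; [apply (near0_and _ _ (near0_abs_le_1 _ Hr) (near0_abs_le_1 _ Hr'))|].
    intros u _ [H1 H2]. apply Hlip; assumption.
  - apply (is_O_scal (S k)), (is_O_mult 1 k).
    + apply is_O_plus; apply is_O_abs; assumption.
    + apply (is_O_abs _ (fun u => r u - r' u)). assumption.
Qed.

Section LocalExpansion.

Variables (F : R -> R) (a : nat -> R).
Hypotheses (HF : has_local_expansion F a) (Ha0 : a 0%nat = 1).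

Lemma local_expansion_comp n r : is_O 1 r -> is_o (2 * n) (fun u => F (r u) - even_jet a n (r u)).
Proof.
  intros [C [HC Hr]] eps Heps.
  assert (HC2 : 0 <= C ^ (2 * n)) by (apply pow_le; lra).
  destruct (HF n (eps / (C ^ (2 * n) + 1))) as [d [Hd Hb]]; [apply Rdiv_lt_0_compat; lra|].
  assert (Hd' : 0 < d / (C + 1)) by (apply Rdiv_lt_0_compat; lra).
  eapply near0_impl; [apply (near0_and _ _ Hr (near0_lt _ Hd'))|].
  intros u Hu [Hru Hud]. rewrite pow_1 in Hru.
  assert (C * u < d).
  { apply Rmult_lt_compat_l with (r := C + 1) in Hud; [|lra].
    replace ((C + 1) * (d / (C + 1))) with d in Hud by (field; lra). nra. }
  eapply Rle_trans; [apply Hb; lra|].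
  apply Rle_trans with (eps / (C ^ (2 * n) + 1) * (C * u) ^ (2 * n)).
  { apply Rmult_le_compat_l; [apply Rlt_le, Rdiv_lt_0_compat; lra|].
    apply pow_incr. split; [apply Rabs_pos | assumption]. }
  rewrite Rpow_mult_distr.
  assert (0 < u ^ (2 * n)) by (apply pow_lt; lra).
  replace (eps / (C ^ (2 * n) + 1) * (C ^ (2 * n) * u ^ (2 * n)))
    with (eps * u ^ (2 * n) * (C ^ (2 * n) / (C ^ (2 * n) + 1))) by (field; lra).
  assert (C ^ (2 * n) / (C ^ (2 * n) + 1) <= 1).
  { apply Rmult_le_reg_r with (C ^ (2 * n) + 1); [lra|].
    replace (C ^ (2 * n) / (C ^ (2 * n) + 1) * (C ^ (2 * n) + 1)) with (C ^ (2 * n))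
      by (field; lra).
    lra. }
  assert (0 < eps * u ^ (2 * n)) by nra. nra.
Qed.

Lemma local_expansion_comp_sub_1 r : is_O 1 r -> is_O 2 (fun u => F (r u) - 1).
Proof.
  intros Hr. apply (is_O_ext _ _ (fun u => (F (r u) - even_jet a 1 (r u)) + a 1%nat * r u ^ 2)).
  { intros u. unfold even_jet. simpl. rewrite Ha0. ring. }
  apply is_O_plus; [apply is_O_of_is_o, (local_expansion_comp 1), Hr|].
  apply is_O_scal, (is_O_pow 1 r 2), Hr.
Qed.

Lemma from_profile_perturb n s t s' t' :
  is_O 1 (fun u => s u - 1) -> is_O 1 (fun u => t u - 1) ->
  is_O 1 (fun u => s' u - 1) -> is_O 1 (fun u => t' u - 1) ->
  is_O (2 * n) (fun u => s u - s' u) -> is_O (2 * n) (fun u => t u - t' u) ->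
  is_o (2 * n) (fun u => from_profile F (s u) (t u) - from_profile F (s' u) (t' u)
                         - ((s u - s' u) + (t u - t' u)) / 2).
Proof.
  intros Hs Ht Hs' Ht' Hss' Htt'.
  set (r := fun u => (t u - s u) / (s u + t u)).
  set (r' := fun u => (t' u - s' u) / (s' u + t' u)).
  assert (Hr : is_O 1 r) by (apply ratio_is_O_1; assumption).
  assert (Hr' : is_O 1 r') by (apply ratio_is_O_1; assumption).
  assert (Hrr' : is_O (2 * n) (fun u => r u - r' u)) by (apply ratio_perturb; assumption).
  apply (is_o_ext _ _ (fun u => ((s u - s' u) + (t u - t' u)) / 2 * (F (r u) - 1)
    + (s' u + t' u) / 2 * ((even_jet a n (r u) - even_jet a n (r' u))
                          + (F (r u) - even_jet a n (r u)) - (F (r' u) - even_jet a n (r' u))))).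
  { intros u. unfold from_profile, r, r'. field. }
  apply is_o_plus.
  - replace (2 * n)%nat with (2 * n + 0)%nat at 1 by lia. apply is_o_mult_r.
    + apply (is_O_ext _ _ (fun u => / 2 * ((s u - s' u) + (t u - t' u)))); [intros; field|].
      apply is_O_scal, is_O_plus; assumption.
    + apply (is_o_0_of_is_O_S 1), local_expansion_comp_sub_1, Hr.
  - replace (2 * n)%nat with (0 + 2 * n)%nat at 1 by lia. apply is_o_mult_r.
    + apply (is_O_ext _ _ (fun u => / 2 * (s' u + t' u))); [intros; field|].
      apply is_O_scal, (is_O_0_of_limit _ 2), sum_near_2; assumption.
    + apply is_o_minus; [apply is_o_plus|].
      * apply even_jet_comp_perturb; assumption.
      * apply local_expansion_comp, Hr.
      * apply local_expansion_comp, Hr'.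
Qed.

Lemma from_profile_sub_mid s t :
  is_O 1 (fun u => s u - 1) -> is_O 1 (fun u => t u - 1) ->
  is_O 2 (fun u => from_profile F (s u) (t u) - (s u + t u) / 2).
Proof.
  intros Hs Ht.
  apply (is_O_ext _ _ (fun u => / 2 * (s u + t u) * (F ((t u - s u) / (s u + t u)) - 1)));
    [intros; unfold from_profile; field|].
  apply (is_O_mult 0 2).
  - apply is_O_scal, (is_O_0_of_limit _ 2), sum_near_2; assumption.
  - apply local_expansion_comp_sub_1, ratio_is_O_1; assumption.
Qed.

Section Edges.

Variable m : R -> R.
Hypothesis Hm : is_O 2 (fun u => m u - 1).

Let Hm1 : is_O 1 (fun u => m u - 1).
Proof. apply (is_O_weaken 2); [lia | exact Hm]. Qed.

Lemma from_profile_left_edge : is_O 2 (fun u => from_profile F (1 - u) (m u) - (1 - u / 2)).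
Proof.
  apply (is_O_ext _ _ (fun u => (from_profile F (1 - u) (m u) - ((1 - u) + m u) / 2) + / 2 * (m u - 1)));
    [intros; field|].
  apply is_O_plus; [|apply is_O_scal, Hm].
  apply from_profile_sub_mid; [|exact Hm1].
  apply (is_O_ext _ _ (fun u => (-1) * u)); [intros; ring | apply is_O_scal, is_O_id].
Qed.

Lemma from_profile_right_edge : is_O 2 (fun u => from_profile F (m u) (1 + u) - (1 + u / 2)).
Proof.
  apply (is_O_ext _ _ (fun u => (from_profile F (m u) (1 + u) - (m u + (1 + u)) / 2) + / 2 * (m u - 1)));
    [intros; field|].
  apply is_O_plus; [|apply is_O_scal, Hm].
  apply from_profile_sub_mid; [exact Hm1|].
  apply (is_O_ext _ _ (fun u => u)); [intros; ring | apply is_O_id].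
Qed.

End Edges.

End LocalExpansion.

Section EdgePair.

Variables A B : R -> R.
Hypotheses (HA : is_O 2 (fun u => A u - (1 - u / 2))) (HB : is_O 2 (fun u => B u - (1 + u / 2))).

Lemma left_edge_near_1 : is_O 1 (fun u => A u - 1).
Proof.
  apply (is_O_ext _ _ (fun u => (A u - (1 - u / 2)) + (- / 2) * u)); [intros; field|].
  apply is_O_plus; [apply (is_O_weaken 2); [lia | exact HA] | apply is_O_scal, is_O_id].
Qed.

Lemma right_edge_near_1 : is_O 1 (fun u => B u - 1).
Proof.
  apply (is_O_ext _ _ (fun u => (B u - (1 + u / 2)) + / 2 * u)); [intros; field|].
  apply is_O_plus; [apply (is_O_weaken 2); [lia | exact HB] | apply is_O_scal, is_O_id].
Qed.

Lemma edge_ratio : is_O 2 (fun u => (B u - A u) / (A u + B u) - u / 2).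
Proof.
  pose proof left_edge_near_1 as HA1. pose proof right_edge_near_1 as HB1.
  apply (is_O_near _ _ (fun u => ((B u - (1 + u / 2)) - (A u - (1 - u / 2))
           - / 2 * (u * ((A u - (1 - u / 2)) + (B u - (1 + u / 2))))) * / (A u + B u))).
  { eapply near0_impl; [apply (sum_neq_0 _ _ HA1 HB1)|]. intros u _ Hu. field. exact Hu. }
  apply (is_O_mult 2 0); [|apply sum_inv_is_O; assumption].
  apply is_O_minus; [apply is_O_minus; assumption|].
  apply is_O_scal, (is_O_mult 1 1); [apply is_O_id|].
  apply (is_O_weaken 2); [lia | apply is_O_plus; assumption].
Qed.

End EdgePair.

Lemma from_profile_diff_profiles FK FM aK aM n A B :
  has_local_expansion FK aK -> has_local_expansion FM aM ->
  (forall j, (j < n)%nat -> aK j = aM j) -> (1 <= n)%nat ->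
  is_O 2 (fun u => A u - (1 - u / 2)) -> is_O 2 (fun u => B u - (1 + u / 2)) ->
  is_o (2 * n) (fun u => from_profile FK (A u) (B u) - from_profile FM (A u) (B u)
                         - (aK n - aM n) * (u / 2) ^ (2 * n)).
Proof.
  intros HK HM Hlow Hn HA HB.
  pose proof (left_edge_near_1 A HA) as HA1. pose proof (right_edge_near_1 B HB) as HB1.
  set (r := fun u => (B u - A u) / (A u + B u)).
  assert (Hhalf : is_O 1 (fun u => u / 2)).
  { apply (is_O_ext _ _ (fun u => / 2 * u)); [intros; field | apply is_O_scal, is_O_id]. }
  assert (Hr2 : is_O 2 (fun u => r u - u / 2)) by (apply edge_ratio; assumption).
  assert (Hr : is_O 1 r) by (apply ratio_is_O_1; assumption).
  assert (Hpow : is_o (2 * n) (fun u => r u ^ (2 * n) - (u / 2) ^ (2 * n))).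
  { replace (2 * n)%nat with (S (2 * n - 1)) by lia.
    apply is_o_of_is_O_S, pow_diff_is_O; assumption. }
  pose proof (local_expansion_comp FK aK HK n r Hr) as EK.
  pose proof (local_expansion_comp FM aM HM n r Hr) as EM.
  assert (Hdiff : is_O (2 * n) (fun u => FK (r u) - FM (r u))).
  { apply (is_O_ext _ _ (fun u => (FK (r u) - even_jet aK n (r u)) - (FM (r u) - even_jet aM n (r u))
                                   + (aK n - aM n) * r u ^ (2 * n))).
    { intros u. rewrite <- even_jet_diff_top by assumption. ring. }
    apply is_O_plus; [apply is_O_minus; apply is_O_of_is_o; assumption|].
    apply is_O_scal. rewrite <- (Nat.mul_1_r (2 * n)) at 1. apply is_O_pow, Hr. }
  apply (is_o_ext _ _ (fun u => ((A u + B u) / 2 - 1) * (FK (r u) - FM (r u))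
      + ((FK (r u) - even_jet aK n (r u)) - (FM (r u) - even_jet aM n (r u))
         + (aK n - aM n) * (r u ^ (2 * n) - (u / 2) ^ (2 * n))))).
  { intros u. pose proof (even_jet_diff_top aK aM n (r u) Hlow).
    unfold from_profile. fold (r u). lra. }
  apply is_o_plus.
  - apply (is_o_mult 0 (2 * n)); [|exact Hdiff].
    apply (is_o_ext _ _ (fun u => / 2 * (A u + B u - 2))); [intros; field|].
    apply is_o_scal, sum_near_2; assumption.
  - apply is_o_plus; [apply is_o_minus; assumption | apply is_o_scal, Hpow].
Qed.

Lemma profile_diff_leading FK FM aK aM n :
  has_local_expansion FK aK -> has_local_expansion FM aM -> (forall j, (j < n)%nat -> aK j = aM j) ->
  is_o (2 * n) (fun u => FK u - FM u - (aK n - aM n) * u ^ (2 * n)).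
Proof.
  intros HK HM Hlow.
  pose proof (local_expansion_comp FK aK HK n (fun u => u) is_O_id) as EK.
  pose proof (local_expansion_comp FM aM HM n (fun u => u) is_O_id) as EM.
  apply (is_o_ext _ _ (fun u => (FK u - even_jet aK n u) - (FM u - even_jet aM n u))).
  - intros u. pose proof (even_jet_diff_top aK aM n u Hlow). lra.
  - apply is_o_minus; assumption.
Qed.

Lemma inner_means_perturb F a n m m' : has_local_expansion F a -> a 0%nat = 1 ->
  is_O 1 (fun u => m u - 1) -> is_O 1 (fun u => m' u - 1) -> is_O (2 * n) (fun u => m u - m' u) ->
  is_o (2 * n) (fun u => from_profile F (1 - u) (m u) - from_profile F (1 - u) (m' u)
                         - (m u - m' u) / 2) /\
  is_o (2 * n) (fun u => from_profile F (m u) (1 + u) - from_profile F (m' u) (1 + u)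
                         - (m u - m' u) / 2).
Proof.
  intros HF Ha0 Hm Hm' Hmm'.
  assert (Hleft : is_O 1 (fun u => (1 - u) - 1)).
  { apply (is_O_ext _ _ (fun u => (-1) * u)); [intros; ring | apply is_O_scal, is_O_id]. }
  assert (Hright : is_O 1 (fun u => (1 + u) - 1)).
  { apply (is_O_ext _ _ (fun u => u)); [intros; ring | apply is_O_id]. }
  split.
  - eapply is_o_ext; [|apply (from_profile_perturb F a HF Ha0 n (fun u => 1 - u) m (fun u => 1 - u) m');
      try assumption; apply (is_O_ext _ _ (fun _ => 0)); [intros; ring | apply is_O_0]].
    intros u. cbv beta. field.
  - eapply is_o_ext; [|apply (from_profile_perturb F a HF Ha0 n m (fun u => 1 + u) m' (fun u => 1 + u));
      try assumption; apply (is_O_ext _ _ (fun _ => 0)); [intros; ring | apply is_O_0]].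
    intros u. cbv beta. field.
Qed.

Section CoefficientStep.

Variables (FK FM FN : R -> R) (aK aM aN : nat -> R) (n : nat).
Hypotheses (HK : has_local_expansion FK aK) (HM : has_local_expansion FM aM)
  (HN : has_local_expansion FN aN) (HK0 : aK 0%nat = 1) (HM0 : aM 0%nat = 1) (HN0 : aN 0%nat = 1)
  (Heq1 : profile_equation FK FM FN) (Heq2 : profile_equation FM FK FN)
  (Hlow : forall j, (j < n)%nat -> aK j = aM j) (Hn : (1 <= n)%nat).

(* Comparing both equations at order [2n] gives [(aK n - aM n) ((1/2)^(2n) - 1/2) = 0]. *)
Lemma expansion_coefficients_step : aK n = aM n.
Proof.
  set (d := aK n - aM n).
  set (A1 := fun u => from_profile FN (1 - u) (FM u)). set (B1 := fun u => from_profile FN (FM u) (1 + u)).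
  set (A2 := fun u => from_profile FN (1 - u) (FK u)). set (B2 := fun u => from_profile FN (FK u) (1 + u)).
  pose proof (profile_diff_leading FK FM aK aM n HK HM Hlow) as Hlead.
  assert (HMK : is_O (2 * n) (fun u => FM u - FK u)).
  { apply (is_O_ext _ _ (fun u => (-1) * (FK u - FM u - d * u ^ (2 * n)) + (- d) * u ^ (2 * n)));
      [intros; ring|].
    apply is_O_plus; apply is_O_scal; [apply is_O_of_is_o, Hlead | apply is_O_pow_id]. }
  pose proof (local_expansion_comp_sub_1 FM aM HM HM0 _ is_O_id) as HM2.
  pose proof (local_expansion_comp_sub_1 FK aK HK HK0 _ is_O_id) as HK2.
  assert (HM1 : is_O 1 (fun u => FM u - 1)) by (apply (is_O_weaken 2); [lia | exact HM2]).
  assert (HK1 : is_O 1 (fun u => FK u - 1)) by (apply (is_O_weaken 2); [lia | exact HK2]).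
  pose proof (from_profile_left_edge FN aN HN HN0 FM HM2) as EA1.
  pose proof (from_profile_right_edge FN aN HN HN0 FM HM2) as EB1.
  pose proof (from_profile_left_edge FN aN HN HN0 FK HK2) as EA2.
  pose proof (from_profile_right_edge FN aN HN HN0 FK HK2) as EB2.
  destruct (inner_means_perturb FN aN n FM FK HN HN0 HM1 HK1 HMK) as [HA HB].
  fold A1 A2 in HA. fold B1 B2 in HB.
  assert (HA' : is_O (2 * n) (fun u => A1 u - A2 u)).
  { apply (is_O_ext _ _ (fun u => (A1 u - A2 u - (FM u - FK u) / 2) + / 2 * (FM u - FK u)));
      [intros; field|].
    apply is_O_plus; [apply is_O_of_is_o, HA | apply is_O_scal, HMK]. }
  assert (HB' : is_O (2 * n) (fun u => B1 u - B2 u)).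
  { apply (is_O_ext _ _ (fun u => (B1 u - B2 u - (FM u - FK u) / 2) + / 2 * (FM u - FK u)));
      [intros; field|].
    apply is_O_plus; [apply is_O_of_is_o, HB | apply is_O_scal, HMK]. }
  pose proof (from_profile_diff_profiles FK FM aK aM n A1 B1 HK HM Hlow Hn EA1 EB1) as T1.
  pose proof (from_profile_perturb FM aM HM HM0 n A1 B1 A2 B2
    (left_edge_near_1 _ EA1) (right_edge_near_1 _ EB1)
    (left_edge_near_1 _ EA2) (right_edge_near_1 _ EB2) HA' HB') as T2.
  assert (Hz : d * ((/ 2) ^ (2 * n) - / 2) = 0).
  { apply (is_o_monomial_coef (2 * n)).
    apply (is_o_near _ _ (fun u =>
        (-1) * (from_profile FK (A1 u) (B1 u) - from_profile FM (A1 u) (B1 u) - d * (u / 2) ^ (2 * n))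
        + (-1) * (from_profile FM (A1 u) (B1 u) - from_profile FM (A2 u) (B2 u)
                  - ((A1 u - A2 u) + (B1 u - B2 u)) / 2)
        + (- / 2) * (A1 u - A2 u - (FM u - FK u) / 2)
        + (- / 2) * (B1 u - B2 u - (FM u - FK u) / 2)
        + / 2 * (FK u - FM u - d * u ^ (2 * n)))).
    - eapply near0_impl; [apply (near0_and _ _ Heq1 Heq2)|]. intros u _ [E1 E2].
      assert (E : from_profile FK (A1 u) (B1 u) = from_profile FM (A2 u) (B2 u))
        by (unfold A1, B1, A2, B2; congruence).
      rewrite E. unfold Rdiv. rewrite Rpow_mult_distr. field.
    - repeat apply is_o_plus; apply is_o_scal; assumption. }
  assert (Hhalf : (/ 2) ^ (2 * n) <= / 4).
  { replace (2 * n)%nat with (2 + 2 * (n - 1))%nat by lia. rewrite pow_add.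
    assert (0 <= (/ 2) ^ (2 * (n - 1)) <= 1).
    { split; [apply pow_le; lra|]. rewrite <- (pow1 (2 * (n - 1))). apply pow_incr; lra. }
    replace ((/ 2) ^ 2) with (/ 4) by (simpl; field). nra. }
  destruct (Rmult_integral _ _ Hz) as [Hd | Hd]; [unfold d in Hd; lra | lra].
Qed.

End CoefficientStep.

Lemma expansion_coefficients_agree FK FM FN aK aM aN :
  has_local_expansion FK aK -> has_local_expansion FM aM -> has_local_expansion FN aN ->
  aK 0%nat = 1 -> aM 0%nat = 1 -> aN 0%nat = 1 ->
  profile_equation FK FM FN -> profile_equation FM FK FN -> forall n, aK n = aM n.
Proof.
  intros HK HM HN HK0 HM0 HN0 Heq1 Heq2 n.
  induction n as [n IH] using (well_founded_induction lt_wf).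
  destruct n as [|n]; [congruence|].
  apply (expansion_coefficients_step FK FM FN aK aM aN); auto. lia.
Qed.

(** * Truncated expansions *)

Fixpoint peval (p : list R) (u : R) : R :=
  match p with [] => 0 | c :: q => c + u * peval q u end.

Fixpoint padd (p q : list R) : list R :=
  match p, q with
  | [], _ => q
  | _, [] => p
  | c :: p', d :: q' => (c + d) :: padd p' q'
  end.

Definition pscal (c : R) (p : list R) : list R := map (fun x => c * x) p.

Fixpoint pmul (p q : list R) : list R :=
  match p with [] => [] | c :: p' => padd (pscal c q) (0 :: pmul p' q) end.

Definition approx (k : nat) (f : R -> R) (p : list R) : Prop := is_o k (fun u => f u - peval p u).

Definition even_jet2_series (a : nat -> R) (r2 : list R) : list R :=
  padd [1] (padd (pscal (a 1%nat) r2) (pscal (a 2%nat) (firstn 5 (pmul r2 r2)))).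

Ltac peval_eq := intros ?u; cbn [peval padd pscal pmul firstn map even_jet2_series]; field.

Lemma peval_padd p q u : peval (padd p q) u = peval p u + peval q u.
Proof. revert q. induction p as [|c p IH]; intros [|d q]; simpl; try ring. rewrite IH. ring. Qed.

Lemma peval_pscal c p u : peval (pscal c p) u = c * peval p u.
Proof. induction p as [|d p IH]; simpl; [ring|]. rewrite IH. ring. Qed.

Lemma peval_pmul p q u : peval (pmul p q) u = peval p u * peval q u.
Proof.
  induction p as [|c p IH]; simpl; [ring|]. rewrite peval_padd, peval_pscal. simpl. rewrite IH. ring.
Qed.

Lemma peval_firstn_skipn n p u : peval p u = peval (firstn n p) u + u ^ n * peval (skipn n p) u.
Proof.
  revert p. induction n as [|n IH]; intros p; [simpl; ring|].
  destruct p as [|c p]; simpl; [ring|]. rewrite IH. ring.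
Qed.

Lemma is_O_peval p : is_O 0 (peval p).
Proof.
  induction p as [|c p IH]; [apply is_O_0|].
  apply (is_O_ext _ _ (fun u => c + u * peval p u)); [reflexivity|].
  apply is_O_plus; [apply is_O_const|].
  apply (is_O_weaken (1 + 0)); [lia | apply is_O_mult; [apply is_O_id | exact IH]].
Qed.

Lemma is_O_peval_firstn k p : is_O (S k) (fun u => peval p u - peval (firstn (S k) p) u).
Proof.
  apply (is_O_ext _ _ (fun u => u ^ S k * peval (skipn (S k) p) u)).
  { intros u. rewrite (peval_firstn_skipn (S k) p u) at 1. ring. }
  rewrite <- (Nat.add_0_r (S k)) at 1. apply is_O_mult; [apply is_O_pow_id | apply is_O_peval].
Qed.

Lemma approx_peval_ext k f p q : approx k f p -> (forall u, peval p u = peval q u) -> approx k f q.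
Proof.
  intros Hf Hpq. apply (is_o_ext _ _ (fun u => f u - peval p u)); [intros; rewrite Hpq; ring | exact Hf].
Qed.

Lemma approx_near k f g p : near0 (fun u => f u = g u) -> approx k g p -> approx k f p.
Proof.
  intros Hfg Hg. apply (is_o_near _ _ (fun u => g u - peval p u)); [|exact Hg].
  eapply near0_impl; [exact Hfg|]. intros u _ ->. reflexivity.
Qed.

Lemma approx_ext k f g p : (forall u, f u = g u) -> approx k g p -> approx k f p.
Proof. intros Hfg. apply approx_near, near0_of_interval01. auto. Qed.

Lemma approx_is_O_0 k f p : approx k f p -> is_O 0 f.
Proof.
  intros Hf. apply (is_O_ext _ _ (fun u => (f u - peval p u) + peval p u)); [intros; ring|].
  apply is_O_plus; [apply (is_O_weaken k); [lia | apply is_O_of_is_o, Hf] | apply is_O_peval].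
Qed.

Lemma approx_plus k f g p q : approx k f p -> approx k g q -> approx k (fun u => f u + g u) (padd p q).
Proof.
  intros Hf Hg. apply (is_o_ext _ _ (fun u => (f u - peval p u) + (g u - peval q u))).
  - intros u. rewrite peval_padd. ring.
  - apply is_o_plus; assumption.
Qed.

Lemma approx_scal k c f p : approx k f p -> approx k (fun u => c * f u) (pscal c p).
Proof.
  intros Hf. apply (is_o_ext _ _ (fun u => c * (f u - peval p u))).
  - intros u. rewrite peval_pscal. ring.
  - apply is_o_scal, Hf.
Qed.

Lemma approx_peval k p : approx k (peval p) p.
Proof. apply (is_o_ext _ _ (fun _ => 0)); [intros; ring | apply is_o_0]. Qed.

Lemma approx_mult k f g p q :
  approx k f p -> approx k g q -> approx k (fun u => f u * g u) (firstn (S k) (pmul p q)).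
Proof.
  intros Hf Hg.
  apply (is_o_ext _ _ (fun u => (f u - peval p u) * g u + peval p u * (g u - peval q u)
                                + (peval (pmul p q) u - peval (firstn (S k) (pmul p q)) u))).
  { intros u. rewrite peval_pmul. ring. }
  apply is_o_plus; [apply is_o_plus|].
  - rewrite <- (Nat.add_0_r k) at 1. apply is_o_mult; [exact Hf | eapply approx_is_O_0; eassumption].
  - apply (is_o_mult_r 0 k); [apply is_O_peval | exact Hg].
  - apply is_o_of_is_O_S, is_O_peval_firstn.
Qed.

Lemma approx_limit k f c p : approx k f (c :: p) -> is_o 0 (fun u => f u - c).
Proof.
  intros Hf. apply (is_o_ext _ _ (fun u => (f u - peval (c :: p) u) + u * peval p u));
    [intros; simpl; ring|].
  apply is_o_plus; [apply (is_o_weaken k); [lia | exact Hf]|].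
  apply (is_o_0_of_is_O_S 0), (is_O_mult 1 0); [apply is_O_id | apply is_O_peval].
Qed.

Lemma approx_inv k f c p q : approx k f (c :: p) -> c <> 0 ->
  (forall u, peval (firstn (S k) (pmul (c :: p) q)) u = 1) -> approx k (fun u => / f u) q.
Proof.
  intros Hf Hc Hq. pose proof (approx_limit _ _ _ _ Hf) as Hlim.
  pose proof (approx_mult k _ _ _ _ Hf (approx_peval k q)) as Hfq.
  apply (is_o_near _ _
    (fun u => (-1) * (f u * peval q u - peval (firstn (S k) (pmul (c :: p) q)) u) * / f u)).
  { eapply near0_impl; [apply (near0_neq_0 _ _ Hlim Hc)|]. intros u _ Hu. rewrite Hq. field. exact Hu. }
  rewrite <- (Nat.add_0_r k) at 1.
  apply is_o_mult; [apply is_o_scal, Hfq | apply (is_O_inv _ _ Hlim Hc)].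
Qed.

Lemma is_o_div_id k g : is_o (S k) (fun u => u * g u) -> is_o k g.
Proof.
  intros Hg eps Heps. eapply near0_impl; [apply (Hg eps Heps)|]. intros u Hu Hgu. simpl in Hgu.
  rewrite Rabs_mult, (Rabs_right u) in Hgu by lra.
  apply Rmult_le_reg_l with u; [assumption | nra].
Qed.

Lemma is_o_peval_coefs_0 p k : (length p <= S k)%nat -> is_o k (peval p) -> Forall (fun c => c = 0) p.
Proof.
  revert k. induction p as [|c q IH]; intros k Hlen Hp; [constructor|].
  assert (Hc : c = 0).
  { apply (is_o_monomial_coef 0).
    apply (is_o_ext _ _ (fun u => peval (c :: q) u + (-1) * (u * peval q u))); [intros; simpl; ring|].
    apply is_o_plus; [apply (is_o_weaken k); [lia | exact Hp]|].
    apply is_o_scal, (is_o_0_of_is_O_S 0), (is_O_mult 1 0); [apply is_O_id | apply is_O_peval]. }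
  constructor; [exact Hc|]. destruct k as [|k].
  - destruct q; [constructor | simpl in Hlen; lia].
  - apply (IH k); [simpl in Hlen; lia|]. apply is_o_div_id.
    apply (is_o_ext _ _ (peval (c :: q))); [intros; simpl; rewrite Hc; ring | exact Hp].
Qed.

Lemma length_padd p q : length (padd p q) = Nat.max (length p) (length q).
Proof. revert q. induction p as [|c p IH]; intros [|d q]; simpl; try lia. rewrite IH. lia. Qed.

Lemma padd_opp_zero_eq p q : length p = length q ->
  Forall (fun c => c = 0) (padd p (pscal (-1) q)) -> p = q.
Proof.
  revert q. induction p as [|c p IH]; intros [|d q] Hlen Hz; try discriminate; [reflexivity|].
  inversion Hz as [|? ? Hcd Hrest]. f_equal; [lra | apply IH; [simpl in Hlen; lia | exact Hrest]].
Qed.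

Lemma approx_unique k f p q : approx k f p -> approx k f q ->
  length p = length q -> (length p <= S k)%nat -> p = q.
Proof.
  intros Hp Hq Hlen Hk. apply padd_opp_zero_eq; [exact Hlen|].
  apply (is_o_peval_coefs_0 _ k).
  - rewrite length_padd. unfold pscal. rewrite length_map. lia.
  - apply (is_o_ext _ _ (fun u => (f u - peval q u) - (f u - peval p u))).
    + intros u. rewrite peval_padd, peval_pscal. ring.
    + apply is_o_minus; assumption.
Qed.

Lemma approx_affine f c0 c1 : (forall u, f u = c0 + c1 * u) -> approx 4 f [c0; c1].
Proof.
  intros Hf. apply (approx_ext _ _ (peval [c0; c1])); [intros; rewrite Hf; simpl; ring|].
  apply approx_peval.
Qed.

Section Order4.

Variables (F : R -> R) (a : nat -> R).
Hypotheses (HF : has_local_expansion F a) (Ha0 : a 0%nat = 1).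

Lemma approx_profile : approx 4 F [1; 0; a 1%nat; 0; a 2%nat].
Proof.
  apply (is_o_ext _ _ (fun u => F u - even_jet a 2 u)).
  - intros u. unfold even_jet. simpl. rewrite Ha0. ring.
  - apply (local_expansion_comp F a HF 2 (fun u => u) is_O_id).
Qed.

Lemma approx_comp_profile r rho : approx 4 r (0 :: rho) ->
  approx 4 (fun u => F (r u)) (even_jet2_series a (firstn 5 (pmul (0 :: rho) (0 :: rho)))).
Proof.
  intros Hr. set (rho2 := firstn 5 (pmul (0 :: rho) (0 :: rho))).
  assert (Hr1 : is_O 1 r).
  { apply (is_O_ext _ _ (fun u => (r u - peval (0 :: rho) u) + u * peval rho u));
      [intros; simpl; ring|].
    apply is_O_plus; [apply (is_O_weaken 4); [lia | apply is_O_of_is_o, Hr]|].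
    apply (is_O_mult 1 0); [apply is_O_id | apply is_O_peval]. }
  pose proof (approx_mult 4 _ _ _ _ Hr Hr) as Hr2.
  pose proof (approx_mult 4 _ _ _ _ Hr2 Hr2) as Hr4.
  pose proof (approx_plus 4 _ _ _ _ (approx_peval 4 [1])
    (approx_plus 4 _ _ _ _ (approx_scal 4 (a 1%nat) _ _ Hr2) (approx_scal 4 (a 2%nat) _ _ Hr4)))
    as Hpoly.
  apply (is_o_ext _ _ (fun u => (F (r u) - even_jet a 2 (r u))
      + ((peval [1] u + (a 1%nat * (r u * r u) + a 2%nat * (r u * r u * (r u * r u))))
         - peval (even_jet2_series a rho2) u))).
  - intros u. unfold even_jet. simpl. rewrite Ha0. ring.
  - apply is_o_plus; [apply (local_expansion_comp F a HF 2 r Hr1) | exact Hpoly].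
Qed.

(* [pinv] and [pr] are the truncated series of [1/(s + t)] and [(t - s)/(s + t)], supplied by
   the caller and certified by the identities checked with [peval_eq]. *)
Lemma approx_from_profile_by s t ps pt c ps' pinv pr :
  approx 4 s ps -> approx 4 t pt ->
  (forall u, peval (padd ps pt) u = peval (c :: ps') u) -> c <> 0 ->
  (forall u, peval (firstn 5 (pmul (c :: ps') pinv)) u = 1) ->
  (forall u, peval (firstn 5 (pmul (padd pt (pscal (-1) ps)) pinv)) u = peval (0 :: pr) u) ->
  approx 4 (fun u => from_profile F (s u) (t u))
    (firstn 5 (pmul (pscal (/ 2) (c :: ps')) (even_jet2_series a (firstn 5 (pmul (0 :: pr) (0 :: pr)))))).
Proof.
  intros Hs Ht Hsum Hc Hinv Hr.
  assert (Hst : approx 4 (fun u => s u + t u) (c :: ps')).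
  { eapply approx_peval_ext; [apply approx_plus; eassumption | exact Hsum]. }
  assert (Hrat : approx 4 (fun u => (t u - s u) * / (s u + t u)) (0 :: pr)).
  { eapply approx_peval_ext; [|exact Hr]. apply approx_mult; [|eapply approx_inv; eassumption].
    apply (approx_ext _ _ (fun u => t u + (-1) * s u)); [intros; ring|].
    apply approx_plus; [|apply approx_scal]; assumption. }
  apply (approx_ext _ _ (fun u => (/ 2 * (s u + t u)) * F ((t u - s u) * / (s u + t u))));
    [intros; unfold from_profile, Rdiv; ring|].
  apply approx_mult; [apply approx_scal, Hst | apply approx_comp_profile; assumption].
Qed.

Section Edges4.

Variables (m : R -> R) (m1 m2 : R).
Hypothesis (Hm : approx 4 m [1; 0; m1; 0; m2]).

Lemma approx_from_profile_left :
  approx 4 (fun u => from_profile F (1 - u) (m u))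
    [1; - / 2; m1 / 2 + a 1%nat / 4; m1 * a 1%nat / 2 + a 1%nat / 8;
     m1 * a 1%nat / 8 + m1 ^ 2 * a 1%nat / 4 + m2 / 2 + a 1%nat / 16 + a 2%nat / 16].
Proof.
  eapply approx_peval_ext.
  - apply (approx_from_profile_by (fun u => 1 - u) m [1; -1] [1; 0; m1; 0; m2] 2 [-1; m1; 0; m2]
      [/ 2; / 4; / 8 - m1 / 4; / 16 - m1 / 4; / 32 - 3 * m1 / 16 + m1 ^ 2 / 8 - m2 / 4]
      [/ 2; / 4 + m1 / 2; / 8; / 16 - m1 / 8 - m1 ^ 2 / 4 + m2 / 2]);
      [apply approx_affine; intros; ring | exact Hm | peval_eq | lra | peval_eq | peval_eq].
  - peval_eq.
Qed.

Lemma approx_from_profile_right :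
  approx 4 (fun u => from_profile F (m u) (1 + u))
    [1; / 2; m1 / 2 + a 1%nat / 4; - (m1 * a 1%nat / 2 + a 1%nat / 8);
     m1 * a 1%nat / 8 + m1 ^ 2 * a 1%nat / 4 + m2 / 2 + a 1%nat / 16 + a 2%nat / 16].
Proof.
  eapply approx_peval_ext.
  - apply (approx_from_profile_by m (fun u => 1 + u) [1; 0; m1; 0; m2] [1; 1] 2 [1; m1; 0; m2]
      [/ 2; - / 4; / 8 - m1 / 4; - / 16 + m1 / 4; / 32 - 3 * m1 / 16 + m1 ^ 2 / 8 - m2 / 4]
      [/ 2; - / 4 - m1 / 2; / 8; - / 16 + m1 / 8 + m1 ^ 2 / 4 - m2 / 2]);
      [exact Hm | apply approx_affine; intros; ring | peval_eq | lra | peval_eq | peval_eq].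
  - peval_eq.
Qed.

End Edges4.

Lemma approx_from_profile_outer A B al be ga :
  approx 4 A [1; - / 2; al; be; ga] -> approx 4 B [1; / 2; al; - be; ga] ->
  approx 4 (fun u => from_profile F (A u) (B u))
    [1; 0; al + a 1%nat / 4; 0; ga - a 1%nat * al / 4 - a 1%nat * be + a 2%nat / 16].
Proof.
  intros HA HB. eapply approx_peval_ext.
  - apply (approx_from_profile_by A B [1; - / 2; al; be; ga] [1; / 2; al; - be; ga]
      2 [0; 2 * al; 0; 2 * ga]
      [/ 2; 0; - al / 2; 0; (al ^ 2 - ga) / 2] [/ 2; 0; - be - al / 2; 0]);
      [exact HA | exact HB | peval_eq | lra | peval_eq | peval_eq].
  - peval_eq.
Qed.

End Order4.

Lemma profile_equation_order4 FK FM FN aK aM aN :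
  has_local_expansion FK aK -> has_local_expansion FM aM -> has_local_expansion FN aN ->
  aK 0%nat = 1 -> aM 0%nat = 1 -> aN 0%nat = 1 -> profile_equation FK FM FN ->
  3 * aN 1%nat = 2 * aM 1%nat + aK 1%nat /\
  15 * aN 2%nat = aN 1%nat + 2 * aM 1%nat * aN 1%nat + 4 * aM 1%nat ^ 2 * aN 1%nat
    - 3 * aK 1%nat * aN 1%nat - 8 * aK 1%nat * aM 1%nat * aN 1%nat - 2 * aK 1%nat * aM 1%nat
    + 8 * aM 2%nat + aK 2%nat.
Proof.
  intros HK HM HN HK0 HM0 HN0 Heq.
  pose proof (approx_profile FM aM HM HM0) as HMa.
  pose proof (approx_from_profile_outer FK aK HK HK0 _ _ _ _ _
    (approx_from_profile_left FN aN HN HN0 FM _ _ HMa)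
    (approx_from_profile_right FN aN HN HN0 FM _ _ HMa)) as HNa.
  pose proof (approx_unique 4 FN _ _ (approx_profile FN aN HN HN0) (approx_near _ _ _ _ Heq HNa)
    eq_refl (le_n 5)) as Hcoef.
  injection Hcoef as H1 H2. split; [lra | nra].
Qed.

Theorem mainTheorem9 (K M N : R -> R -> R) (aK aM aN : nat -> R) :
  is_mean K -> symmetric K -> homogeneous K -> stable K ->
  is_mean M -> symmetric M -> homogeneous M -> stable M ->
  is_mean N -> symmetric N -> homogeneous N ->
  has_sym_asymp_exp K aK -> has_sym_asymp_exp M aM -> has_sym_asymp_exp N aN ->
  stabilizable K M N -> stabilizable M K N ->
  (forall n : nat, aK n = aM n) /\
  aN 1%nat = aM 1%nat /\ aM 1%nat = aK 1%nat /\
  aN 2%nat = 1 / 6 * aN 1%nat * (1 + aN 1%nat) * (1 - 4 * aN 1%nat).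
Proof.
  intros HKm HKs HKh HKst HMm HMs HMh HMst HNm HNs HNh HKa HMa HNa Hstab1 Hstab2.
  pose proof (profile_local_expansion K aK HKm HKs HKh HKa) as HK.
  pose proof (profile_local_expansion M aM HMm HMs HMh HMa) as HM.
  pose proof (profile_local_expansion N aN HNm HNs HNh HNa) as HN.
  pose proof (asymp_expansion_coef0 K aK HKm HKa) as HK0.
  pose proof (asymp_expansion_coef0 M aM HMm HMa) as HM0.
  pose proof (asymp_expansion_coef0 N aN HNm HNa) as HN0.
  pose proof (profile_stabilizable K M N HMm HNm HKh HNh Hstab1) as Heq1.
  pose proof (profile_stabilizable M K N HKm HNm HMh HNh Hstab2) as Heq2.
  (* A stable mean is [(M, M)]-stabilizable, with [N := M]. *)
  pose proof (profile_stabilizable M M M HMm HMm HMh HMh HMst) as HeqM.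
  pose proof (expansion_coefficients_agree _ _ _ aK aM aN HK HM HN HK0 HM0 HN0 Heq1 Heq2) as HKM.
  destruct (profile_equation_order4 _ _ _ aK aM aN HK HM HN HK0 HM0 HN0 Heq1) as [HN1 HN2].
  destruct (profile_equation_order4 _ _ _ aM aM aM HM HM HM HM0 HM0 HM0 HeqM) as [_ HM2].
  rewrite (HKM 1%nat) in HN1, HN2. rewrite (HKM 2%nat) in HN2.
  assert (Ha1 : aN 1%nat = aM 1%nat) by lra.
  rewrite Ha1 in HN2 |- *.
  repeat split; [exact HKM | symmetry; apply HKM | nra].
Qed.
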